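(* Let $\alpha:I\to\mathbb{E}^3$ ($I\subset\mathbb{R}$ an open interval) be a smooth space curve parametrized by arclength $s$ with curvature $\kappa\equiv 1$. Then the tangent indicatrix $T=\alpha'$ of $\alpha$ is a spherical helix if and only if $\det(\alpha^{(3)}(s),\alpha^{(4)}(s),\alpha^{(5)}(s))=0$ for all $s\in I$.
   Context: $\alpha^{(k)}$ denotes the $k$-th derivative of $\alpha$ with respect to arclength, and $\det(u,v,w)$ is the determinant of the $3\times 3$ matrix with columns $u,v,w$. $\{T,N,B\}$ is the Frenet frame of $\alpha$, with $T'=\kappa N$, $N'=-\kappa T+\tau B$, $B'=-\tau N$, where $\tau$ is the torsion. The tangent indicatrix is the curve $s\mapsto T(s)$ on the unit sphere; since $\kappa\equiv1$, $s$ is also an arclength parameter of $T$. A curve is a helix (curve of constant slope) if its unit tangent vector makes a constant angle with a fixed direction; a spherical helix is a helix lying on a sphere. *)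

From Stdlib Require Import Reals.
Open Scope R_scope.

Record vec3 : Type := mkV { vx : R; vy : R; vz : R }.

Definition vzero : vec3 := mkV 0 0 0.
Definition vsub (u v : vec3) : vec3 := mkV (vx u - vx v) (vy u - vy v) (vz u - vz v).
Definition vscale (a : R) (u : vec3) : vec3 := mkV (a * vx u) (a * vy u) (a * vz u).
Definition dot (u v : vec3) : R := vx u * vx v + vy u * vy v + vz u * vz v.
Definition vnorm (u : vec3) : R := sqrt (dot u u).
Definition cross (u v : vec3) : vec3 :=
  mkV (vy u * vz v - vz u * vy v)
      (vz u * vx v - vx u * vz v)
      (vx u * vy v - vy u * vx v).
(* det(u,v,w) = determinant of the 3x3 matrix with columns u, v, w *)
Definition det3 (u v w : vec3) : R := dot u (cross v w).

Definition is_open_interval (I : R -> Prop) : Prop :=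
  (exists x, I x) /\
  (forall x y z, I x -> I z -> x <= y <= z -> I y) /\
  (forall x, I x -> exists e, 0 < e /\ forall y, Rabs (y - x) < e -> I y).

Definition vderiv (g : R -> vec3) (s : R) (v : vec3) : Prop :=
  derivable_pt_lim (fun t => vx (g t)) s (vx v) /\
  derivable_pt_lim (fun t => vy (g t)) s (vy v) /\
  derivable_pt_lim (fun t => vz (g t)) s (vz v).

(* D is the sequence of all derivatives of a smooth curve on I:
   D (k+1) is the derivative of D k at every point of I.  Thus D 0 is
   C^infinity on I and D k is its k-th derivative. *)
Definition derivative_tower (I : R -> Prop) (D : nat -> R -> vec3) : Prop :=
  forall k s, I s -> vderiv (D k) s (D (S k) s).

Definition is_helix (I : R -> Prop) (g : R -> vec3) : Prop :=
  exists g' : R -> vec3,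
    (forall s, I s -> vderiv g s (g' s)) /\
    (forall s, I s -> g' s <> vzero) /\
    exists u : vec3, vnorm u = 1 /\
    exists theta : R, forall s, I s ->
      dot (vscale (/ vnorm (g' s)) (g' s)) u = cos theta.

Definition on_sphere (I : R -> Prop) (g : R -> vec3) : Prop :=
  exists (c : vec3) (r : R), 0 < r /\ forall s, I s -> vnorm (vsub (g s) c) = r.

Definition is_spherical_helix (I : R -> Prop) (g : R -> vec3) : Prop :=
  is_helix I g /\ on_sphere I g.

From Stdlib Require Import Reals Lra Psatz.
Open Scope R_scope.

(* Write D k = alpha^(k), so T = D 1 and T' = D 2 is a unit vector.
   Since T is a unit curve it lies on the unit sphere, and (its speed being 1) it is
   a helix iff D 2 . u is constant for some unit vector u.
   - If D 2 . u is constant, differentiating gives D 3, D 4, D 5 all orthogonal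
     to u, so the three vectors are coplanar and det(D 3, D 4, D 5) = 0.
   - Conversely, differentiating |D 1| = |D 2| = 1 shows that V = D 3 x D 4 never
     vanishes, and V' = D 3 x D 5 satisfies V x V' = det(D 3, D 4, D 5) D 3 = 0.
     A nonvanishing vector field parallel to its derivative has constant direction
     (here: (V.w)^2/|V|^2 is constant for every w), so the constant unit vector u
     along V is orthogonal to D 3 = (D 2)', and D 2 . u is constant. *)

Definition vadd (u v : vec3) : vec3 := mkV (vx u + vx v) (vy u + vy v) (vz u + vz v).

Lemma dot_comm u v : dot u v = dot v u.
Proof. unfold dot; ring. Qed.

Lemma dot_vzero_r u : dot u vzero = 0.
Proof. unfold dot, vzero; simpl; ring. Qed.

Lemma dot_self_of_unit v : vnorm v = 1 -> dot v v = 1.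
Proof.
  unfold vnorm; intro H. rewrite <- (sqrt_sqrt (dot v v)).
  - rewrite H; ring.
  - unfold dot; nra.
Qed.

Lemma unit_of_dot_self v : dot v v = 1 -> vnorm v = 1.
Proof. unfold vnorm; intro H; rewrite H; apply sqrt_1. Qed.

Lemma dot_scale_r a v w : dot w (vscale a v) = a * dot v w.
Proof. unfold dot, vscale; simpl; ring. Qed.

Lemma normalize_unit v : 0 < dot v v -> vnorm (vscale (/ sqrt (dot v v)) v) = 1.
Proof.
  intro Hv. apply unit_of_dot_self. rewrite !dot_scale_r.
  pose proof (sqrt_lt_R0 _ Hv) as Hr.
  assert (Hsq : sqrt (dot v v) * sqrt (dot v v) = dot v v) by (apply sqrt_sqrt; lra).
  rewrite <- Hsq at 3. field; lra.
Qed.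

Lemma dot_self_pos a b : dot a b <> 0 -> 0 < dot a a.
Proof.
  unfold dot; destruct a as [x y z], b; simpl. intros H.
  destruct (Rle_lt_dec (x*x+y*y+z*z) 0) as [L|L]; auto.
  assert (x = 0) by nra. assert (y = 0) by nra. assert (z = 0) by nra.
  subst. exfalso; apply H; ring.
Qed.

Lemma unit_dot_bound a b : dot a a = 1 -> dot b b = 1 -> -1 <= dot a b <= 1.
Proof.
  unfold dot; destruct a as [a1 a2 a3], b as [b1 b2 b3]; simpl; intros.
  pose proof (Rle_0_sqr (a1 - b1)); pose proof (Rle_0_sqr (a2 - b2));
    pose proof (Rle_0_sqr (a3 - b3)); pose proof (Rle_0_sqr (a1 + b1));
    pose proof (Rle_0_sqr (a2 + b2)); pose proof (Rle_0_sqr (a3 + b3)).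
  unfold Rsqr in *. split; lra.
Qed.

Lemma cross_orth_l a b : dot (cross a b) a = 0.
Proof. unfold dot, cross; simpl; ring. Qed.

Lemma lagrange a b c d : dot (cross a b) (cross c d) = dot a c * dot b d - dot a d * dot b c.
Proof. unfold dot, cross; simpl; ring. Qed.

(* (a x b) x a = |a|^2 b - (a.b) a, tested against w: it vanishes iff b is parallel to a. *)
Lemma dot_cross_cross a b w : dot (cross (cross a b) a) w = dot b w * dot a a - dot a w * dot a b.
Proof. unfold dot, cross; simpl; ring. Qed.

Lemma det3_orthogonal a b c u : 0 < dot u u ->
  dot a u = 0 -> dot b u = 0 -> dot c u = 0 -> det3 a b c = 0.
Proof.
  intros Hu Ha Hb Hc.
  assert (E : det3 a b c * dot u u =
    dot a u * dot (cross b c) u + dot b u * dot (cross c a) u + dot c u * dot (cross a b) u)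
    by (unfold det3, dot, cross; simpl; ring).
  rewrite Ha, Hb, Hc in E. nra.
Qed.

(* (a x b) x (a x c) = det(a,b,c) a: the derivative of a x b is parallel to it
   when a' = b, b' = c and det(a,b,c) = 0. *)
Lemma cross_parallel_of_det a b c : det3 a b c = 0 ->
  cross (cross a b) (vadd (cross b b) (cross a c)) = vzero.
Proof.
  intro H. transitivity (vscale (det3 a b c) a).
  - unfold det3, dot, cross, vadd, vscale; simpl; f_equal; ring.
  - rewrite H; unfold vscale, vzero; f_equal; ring.
Qed.

(* Differentiation rules with the value of the derivative left as an equation. *)

Lemma dlim_plus f g x l m L : derivable_pt_lim f x l -> derivable_pt_lim g x m ->
  L = l + m -> derivable_pt_lim (fun t => f t + g t) x L.
Proof. intros; subst; apply (derivable_pt_lim_plus f g); auto. Qed.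

Lemma dlim_minus f g x l m L : derivable_pt_lim f x l -> derivable_pt_lim g x m ->
  L = l - m -> derivable_pt_lim (fun t => f t - g t) x L.
Proof. intros; subst; apply (derivable_pt_lim_minus f g); auto. Qed.

Lemma dlim_mult f g x l m L : derivable_pt_lim f x l -> derivable_pt_lim g x m ->
  L = l * g x + f x * m -> derivable_pt_lim (fun t => f t * g t) x L.
Proof. intros; subst; apply (derivable_pt_lim_mult f g); auto. Qed.

Lemma dlim_div f g x l m L : derivable_pt_lim f x l -> derivable_pt_lim g x m ->
  g x <> 0 -> L = (l * g x - m * f x) / (g x)² -> derivable_pt_lim (fun t => f t / g t) x L.
Proof. intros; subst; apply (derivable_pt_lim_div f g); auto. Qed.

Lemma vderiv_unique g s a b : vderiv g s a -> vderiv g s b -> a = b.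
Proof.
  intros [Ax [Ay Az]] [Bx [By Bz]]. destruct a, b; simpl in *.
  f_equal; eapply uniqueness_limite; eauto.
Qed.

Lemma dot_deriv f g s f' g' : vderiv f s f' -> vderiv g s g' ->
  derivable_pt_lim (fun t => dot (f t) (g t)) s (dot f' (g s) + dot (f s) g').
Proof.
  intros [a [b c]] [d [e h]]; unfold dot.
  eapply dlim_plus; [eapply dlim_plus; [eapply dlim_mult; eauto | eapply dlim_mult; eauto |]
    | eapply dlim_mult; eauto |]; reflexivity || ring.
Qed.

Lemma dot_fixed_deriv f s f' u : vderiv f s f' ->
  derivable_pt_lim (fun t => dot (f t) u) s (dot f' u).
Proof.
  intros Hf. replace (dot f' u) with (dot f' u + dot (f s) vzero)
    by (rewrite dot_vzero_r; ring).
  apply (dot_deriv f (fun _ => u)); [exact Hf |].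
  split; [|split]; apply derivable_pt_lim_const.
Qed.

Lemma cross_deriv f g s f' g' : vderiv f s f' -> vderiv g s g' ->
  vderiv (fun t => cross (f t) (g t)) s (vadd (cross f' (g s)) (cross (f s) g')).
Proof.
  intros [a [b c]] [d [e h]]; unfold cross, vadd; simpl.
  split; [|split]; (eapply dlim_minus; [eapply dlim_mult; eauto | eapply dlim_mult; eauto |]);
    simpl; ring.
Qed.

Lemma deriv_of_const J f c x l : is_open_interval J -> (forall s, J s -> f s = c) -> J x ->
  derivable_pt_lim f x l -> l = 0.
Proof.
  intros [_ [_ Ho]] Hc Jx Hd.
  apply (uniqueness_limite f x); auto.
  intros eps Heps. destruct (Ho x Jx) as [e [He Hb]].
  exists (mkposreal e He). intros h Hh0 Hh. simpl in Hh.
  rewrite (Hc (x+h)), (Hc x); auto.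
  - replace ((c - c) / h - 0) with 0 by (field; auto). rewrite Rabs_R0; lra.
  - apply Hb. replace (x + h - x) with h by ring. auto.
Qed.

Lemma const_of_zero_deriv J f : is_open_interval J ->
  (forall s, J s -> derivable_pt_lim f s 0) -> forall x y, J x -> J y -> f x = f y.
Proof.
  intros [_ [Hconv _]] Hd.
  assert (K : forall x y, x < y -> J x -> J y -> f x = f y).
  { intros x y Hxy Jx Jy.
    destruct (MVT_cor2 f (fun _ => 0) x y Hxy) as [c [E _]].
    - intros c Hc. apply Hd. apply (Hconv x c y); auto.
    - lra. }
  intros x y Jx Jy. destruct (total_order_T x y) as [[H|H]|H]; auto.
  - subst; auto.
  - symmetry; auto.
Qed.

Section Tower.
Variables (J : R -> Prop) (D : nat -> R -> vec3).
Hypothesis HJ : is_open_interval J.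
Hypothesis HT : derivative_tower J D.

Lemma tower_dot_const i j c : (forall s, J s -> dot (D i s) (D j s) = c) ->
  forall s, J s -> dot (D (S i) s) (D j s) + dot (D i s) (D (S j) s) = 0.
Proof.
  intros Hc s Js.
  eapply (deriv_of_const J (fun t => dot (D i t) (D j t))); eauto.
  apply dot_deriv; apply HT; auto.
Qed.

Lemma tower_orth_of_const i u c : (forall s, J s -> dot (D i s) u = c) ->
  forall s, J s -> dot (D (S i) s) u = 0.
Proof.
  intros Hc s Js.
  eapply (deriv_of_const J (fun t => dot (D i t) u)); eauto.
  apply dot_fixed_deriv, HT; auto.
Qed.

Lemma tower_const_of_orth i u : (forall s, J s -> dot (D (S i) s) u = 0) ->
  forall x y, J x -> J y -> dot (D i x) u = dot (D i y) u.
Proof.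
  intros Horth. apply (const_of_zero_deriv J (fun t => dot (D i t) u) HJ).
  intros s Js. rewrite <- (Horth s Js). apply dot_fixed_deriv, HT; auto.
Qed.

(* For a unit-speed curve of curvature 1, V = alpha''' x alpha'''' never vanishes:
   differentiating |D 1| = |D 2| = 1 gives V . (D 1 x D 2) = |D 3|^2 and D 1 . D 3 = -1. *)
Lemma unit_curvature_cross_nonzero :
  (forall s, J s -> vnorm (D 1%nat s) = 1) -> (forall s, J s -> vnorm (D 2%nat s) = 1) ->
  forall s, J s -> 0 < dot (cross (D 3%nat s) (D 4%nat s)) (cross (D 3%nat s) (D 4%nat s)).
Proof.
  intros H1 H2.
  assert (e11 : forall s, J s -> dot (D 1%nat s) (D 1%nat s) = 1)
    by (intros; apply dot_self_of_unit; auto).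
  assert (e22 : forall s, J s -> dot (D 2%nat s) (D 2%nat s) = 1)
    by (intros; apply dot_self_of_unit; auto).
  assert (e12 : forall s, J s -> dot (D 1%nat s) (D 2%nat s) = 0).
  { intros s Js. pose proof (tower_dot_const 1 1 1 e11 s Js) as E.
    rewrite dot_comm in E; lra. }
  assert (e13 : forall s, J s -> dot (D 1%nat s) (D 3%nat s) = -1).
  { intros s Js. pose proof (tower_dot_const 1 2 0 e12 s Js) as E.
    rewrite (e22 s Js) in E; lra. }
  assert (e23 : forall s, J s -> dot (D 2%nat s) (D 3%nat s) = 0).
  { intros s Js. pose proof (tower_dot_const 2 2 1 e22 s Js) as E.
    rewrite dot_comm in E; lra. }
  assert (e14 : forall s, J s -> dot (D 1%nat s) (D 4%nat s) = 0).
  { intros s Js. pose proof (tower_dot_const 1 3 (-1) e13 s Js) as E.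
    rewrite (e23 s Js) in E; lra. }
  intros s Js.
  pose proof (tower_dot_const 2 3 0 e23 s Js) as e24.
  assert (P : dot (cross (D 3%nat s) (D 4%nat s)) (cross (D 1%nat s) (D 2%nat s))
              = dot (D 3%nat s) (D 3%nat s)).
  { rewrite lagrange, (dot_comm (D 3%nat s) (D 1%nat s)), (dot_comm (D 4%nat s) (D 2%nat s)),
      (dot_comm (D 3%nat s) (D 2%nat s)), (dot_comm (D 4%nat s) (D 1%nat s)),
      (e13 s Js), (e23 s Js), (e14 s Js). lra. }
  assert (Q : 0 < dot (D 3%nat s) (D 3%nat s)).
  { apply (dot_self_pos _ (D 1%nat s)). rewrite dot_comm, (e13 s Js). lra. }
  apply (dot_self_pos _ (cross (D 1%nat s) (D 2%nat s))). lra.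
Qed.

End Tower.

Section ConstantDirection.
Variables (J : R -> Prop) (V V' : R -> vec3).
Hypothesis HJ : is_open_interval J.
Hypothesis HV : forall s, J s -> vderiv V s (V' s).
Hypothesis Hnz : forall s, J s -> 0 < dot (V s) (V s).
Hypothesis Hpar : forall s, J s -> cross (V s) (V' s) = vzero.

(* (V . w)^2 / |V|^2 is the squared cosine of the angle between V and w (times |w|^2). *)
Lemma squared_cosine_const w : forall x y, J x -> J y ->
  dot (V x) w * dot (V x) w / dot (V x) (V x) = dot (V y) w * dot (V y) w / dot (V y) (V y).
Proof.
  apply (const_of_zero_deriv J (fun t => dot (V t) w * dot (V t) w / dot (V t) (V t)) HJ).
  intros s Js.
  assert (Key : dot (V' s) w * dot (V s) (V s) - dot (V s) w * dot (V s) (V' s) = 0).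
  { rewrite <- dot_cross_cross, (Hpar s Js). unfold dot, cross, vzero; simpl; ring. }
  pose proof (Hnz s Js) as N.
  eapply dlim_div;
    [ eapply dlim_mult; [apply dot_fixed_deriv, HV | apply dot_fixed_deriv, HV | reflexivity]
    | apply dot_deriv; apply HV | lra | ]; auto.
  rewrite (dot_comm (V' s) (V s)). unfold Rsqr.
  field_simplify_eq; [| lra].
  transitivity (2 * dot (V s) w * 0); [ring | rewrite <- Key; ring].
Qed.

Lemma orthogonal_stays_orthogonal w x y : J x -> J y -> dot (V x) w = 0 -> dot (V y) w = 0.
Proof.
  intros Jx Jy Hw.
  pose proof (squared_cosine_const w x y Jx Jy) as F.
  rewrite Hw in F. replace (0 * 0 / dot (V x) (V x)) with 0 in F by (unfold Rdiv; ring).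
  pose proof (Hnz y Jy) as N.
  assert (A : dot (V y) w * dot (V y) w = 0).
  { apply (Rmult_eq_reg_r (/ dot (V y) (V y))); [| apply Rinv_neq_0_compat; lra].
    rewrite Rmult_0_l. exact (eq_sym F). }
  nra.
Qed.

End ConstantDirection.

Lemma helix_iff_const_slope I g T : (exists s, I s) ->
  (forall s, I s -> vderiv g s (T s)) -> (forall s, I s -> vnorm (T s) = 1) ->
  (is_helix I g <-> exists u, vnorm u = 1 /\ exists c, forall s, I s -> dot (T s) u = c).
Proof.
  intros [s0 Is0] HgT HT1. split.
  - intros [g' [Hg' [_ [u [Hu [theta Hth]]]]]].
    exists u; split; [exact Hu|]. exists (cos theta). intros s Is.
    rewrite <- (Hth s Is), (vderiv_unique g s (g' s) (T s)), (HT1 s Is), Rinv_1 by auto.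
    unfold dot, vscale; simpl; ring.
  - intros [u [Hu [c Hc]]].
    exists T. split; [exact HgT|]. split.
    { intros s Is E. pose proof (HT1 s Is) as N. rewrite E in N.
      unfold vnorm in N. rewrite dot_vzero_r, sqrt_0 in N. lra. }
    exists u. split; [exact Hu|].
    exists (acos c). intros s Is.
    rewrite <- (Hc s0 Is0), cos_acos
      by (apply unit_dot_bound; apply dot_self_of_unit; auto).
    rewrite (HT1 s Is), Rinv_1, (Hc s0 Is0), <- (Hc s Is). unfold dot, vscale; simpl; ring.
Qed.

Lemma unit_curve_on_sphere I g : (forall s, I s -> vnorm (g s) = 1) -> on_sphere I g.
Proof.
  intros Hg. exists vzero, 1. split; [lra|]. intros s Is.
  replace (vsub (g s) vzero) with (g s); auto.
  destruct (g s); unfold vsub, vzero; simpl; f_equal; ring.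
Qed.

Lemma const_slope_det_zero J D u c : is_open_interval J -> derivative_tower J D ->
  vnorm u = 1 -> (forall s, J s -> dot (D 2%nat s) u = c) ->
  forall s, J s -> det3 (D 3%nat s) (D 4%nat s) (D 5%nat s) = 0.
Proof.
  intros HJ HT Hu Hc.
  pose proof (tower_orth_of_const J D HJ HT 2 u c Hc) as E3.
  pose proof (tower_orth_of_const J D HJ HT 3 u 0 E3) as E4.
  pose proof (tower_orth_of_const J D HJ HT 4 u 0 E4) as E5.
  intros s Js. apply (det3_orthogonal _ _ _ u); auto.
  rewrite (dot_self_of_unit u Hu); lra.
Qed.

(* Coplanarity implies that alpha'' has constant component along the constant
   unit direction of alpha''' x alpha''''. *)
Lemma det_zero_const_slope J D : is_open_interval J -> derivative_tower J D ->
  (forall s, J s -> vnorm (D 1%nat s) = 1) -> (forall s, J s -> vnorm (D 2%nat s) = 1) ->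
  (forall s, J s -> det3 (D 3%nat s) (D 4%nat s) (D 5%nat s) = 0) ->
  exists u, vnorm u = 1 /\ exists c, forall s, J s -> dot (D 2%nat s) u = c.
Proof.
  intros HJ HT H1 H2 Hdet.
  set (V := fun s => cross (D 3%nat s) (D 4%nat s)).
  pose proof (unit_curvature_cross_nonzero J D HJ HT H1 H2) as Hnz.
  assert (HV : forall s, J s ->
      vderiv V s (vadd (cross (D 4%nat s) (D 4%nat s)) (cross (D 3%nat s) (D 5%nat s))))
    by (intros; apply cross_deriv; apply HT; auto).
  assert (Hpar : forall s, J s ->
      cross (V s) (vadd (cross (D 4%nat s) (D 4%nat s)) (cross (D 3%nat s) (D 5%nat s))) = vzero)
    by (intros; apply cross_parallel_of_det; auto).
  destruct (proj1 HJ) as [s0 Js0].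
  set (u := vscale (/ sqrt (dot (V s0) (V s0))) (V s0)).
  assert (D3_orth : forall s, J s -> dot (D 3%nat s) u = 0).
  { intros s Js. unfold u. rewrite dot_scale_r.
    rewrite (orthogonal_stays_orthogonal J V _ HJ HV Hnz Hpar (D 3%nat s) s s0 Js Js0); [ring|].
    apply cross_orth_l. }
  exists u. split; [exact (normalize_unit _ (Hnz s0 Js0))|].
  exists (dot (D 2%nat s0) u). intros s Js.
  exact (tower_const_of_orth J D HJ HT 2 u D3_orth s s0 Js Js0).
Qed.

Theorem theorem1 (J : R -> Prop) (D : nat -> R -> vec3) :
  is_open_interval J ->
  derivative_tower J D ->
  (forall s, J s -> vnorm (D 1%nat s) = 1) ->
  (forall s, J s -> vnorm (D 2%nat s) = 1) ->
  (is_spherical_helix J (D 1%nat) <->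
   forall s, J s -> det3 (D 3%nat s) (D 4%nat s) (D 5%nat s) = 0).
Proof.
  intros HJ HT H1 H2.
  assert (Hslope := helix_iff_const_slope J (D 1%nat) (D 2%nat) (proj1 HJ) (HT 1%nat) H2).
  split.
  - intros [Hhelix _]. apply Hslope in Hhelix as [u [Hu [c Hc]]].
    exact (const_slope_det_zero J D u c HJ HT Hu Hc).
  - intros Hdet. split.
    + apply Hslope, det_zero_const_slope; auto.
    + apply unit_curve_on_sphere; exact H1.
Qed.
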